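(* For any pair of $n$-dimensional nested lattices $\Lambda\subseteq\Lambda_f\subset\mathbb{R}^n$ and any $\mathbf{x}\in\mathbb{R}^n$, $$[Q_{\Lambda_f}(\mathbf{x})]\bmod\Lambda=Q_{\Lambda_f}\big([\mathbf{x}]\bmod\Lambda\big)+Q_{\Lambda}\Big([Q_{\Lambda_f}(\mathbf{x})]\bmod\Lambda+\mathbf{x}-Q_{\Lambda_f}(\mathbf{x})\Big).$$
   Context: For a lattice $L\subset\mathbb{R}^n$ with Voronoi region $\mathcal{V}_L$ (the set of points whose nearest lattice point is $\mathbf{0}$, ties broken systematically so that $\mathcal{V}_L$ is a fundamental domain), $Q_L(\mathbf{y})$ is the unique $\mathbf{t}\in L$ with $\mathbf{y}-\mathbf{t}\in\mathcal{V}_L$, and $[\mathbf{y}]\bmod L=\mathbf{y}-Q_L(\mathbf{y})$. *)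

From HB Require Import structures.
From mathcomp Require Import all_boot all_order all_algebra.
From mathcomp Require Import boolp classical_sets reals.
Set Implicit Arguments. Unset Strict Implicit. Unset Printing Implicit Defensive.
Import Order.TTheory GRing.Theory Num.Theory.
Local Open Scope classical_set_scope.
Local Open Scope ring_scope.

Definition sqnorm (R : realType) (n : nat) (v : 'rV[R]_n) : R :=
  \sum_(i < n) v ord0 i ^+ 2.

Definition is_lattice (R : realType) (n : nat) (L : set 'rV[R]_n) : Prop :=
  exists B : 'M[R]_n, B \in unitmx /\
    L = [set v | exists z : 'rV[int]_n, v = map_mx (fun k : int => k%:~R) z *m B].

(* V is a Voronoi region of L with ties broken so that it is a fundamental
   domain: every point of V has 0 as a nearest lattice point, and every y has
   a unique lattice point t with y - t in V. *)
Definition is_voronoi_region (R : realType) (n : nat) (L V : set 'rV[R]_n) : Prop :=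
  (forall v t, V v -> L t -> sqnorm v <= sqnorm (v - t)) /\
  (forall y, exists! t, L t /\ V (y - t)).

(* Q_L(y): the (unique, given is_voronoi_region) t in L with y - t in V. *)
Definition Q (R : realType) (n : nat) (L V : set 'rV[R]_n) (y : 'rV[R]_n) : 'rV[R]_n :=
  xget 0 [set t | L t /\ V (y - t)].

Definition modL (R : realType) (n : nat) (L V : set 'rV[R]_n) (y : 'rV[R]_n) : 'rV[R]_n :=
  y - Q L V y.

From HB Require Import structures.
From mathcomp Require Import all_boot all_order all_algebra.
From mathcomp Require Import boolp classical_sets reals.
Import Order.TTheory GRing.Theory Num.Theory.
Local Open Scope classical_set_scope.
Local Open Scope ring_scope.

(* The quantizer of a fundamental domain commutes with lattice translations:
   Q_L(y - a) = Q_L(y) - a for a in L.  With a := Q_L(x), which lies in L and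
   hence in L_f, the first summand is Q_{L_f}(x) - Q_L(x); the argument of the
   second simplifies to x - Q_L(Q_{L_f}(x)), whose quantization is
   Q_L(x) - Q_L(Q_{L_f}(x)).  The two sum to [Q_{L_f}(x)] mod L. *)

Lemma latticeB (R : realType) (n : nat) (L : set 'rV[R]_n) (a b : 'rV[R]_n) :
  is_lattice L -> L a -> L b -> L (a - b).
Proof.
move=> [B [_ ->]] [za ->] [zb ->]; exists (za - zb).
rewrite -mulmxBl; congr (_ *m _); apply/matrixP => i j.
by rewrite !mxE intrD intrN.
Qed.

Section Quantizer.

Context {R : realType} {n : nat} {L V : set 'rV[R]_n}.
Hypothesis voronoi_LV : is_voronoi_region L V.

Lemma Q_mem (y : 'rV[R]_n) : L (Q L V y) /\ V (y - Q L V y).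
Proof.
have [t [Lt _]] := voronoi_LV.2 y.
by apply: (@xgetPex _ 0 [set t | L t /\ V (y - t)]); exists t.
Qed.

Lemma Q_unique (y t : 'rV[R]_n) : L t -> V (y - t) -> Q L V y = t.
Proof.
move=> Lt Vt; have [u [_ u_unique]] := voronoi_LV.2 y.
by rewrite -(u_unique _ (Q_mem y)) (u_unique _ (conj Lt Vt)).
Qed.

Lemma QB_lattice (y a : 'rV[R]_n) :
  is_lattice L -> L a -> Q L V (y - a) = Q L V y - a.
Proof.
move=> lattice_L La; have [LQy VQy] := Q_mem y.
apply: Q_unique; first exact: latticeB.
by rewrite opprB addrA subrK.
Qed.

End Quantizer.

Theorem lemma5 (R : realType) (n : nat) (L Lf V Vf : set 'rV[R]_n) :
  is_lattice L -> is_lattice Lf -> L `<=` Lf ->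
  is_voronoi_region L V -> is_voronoi_region Lf Vf ->
  forall x : 'rV[R]_n,
    modL L V (Q Lf Vf x) =
    Q Lf Vf (modL L V x) + Q L V (modL L V (Q Lf Vf x) + x - Q Lf Vf x).
Proof.
move=> lattice_L lattice_Lf L_sub_Lf voronoi_L voronoi_Lf x; rewrite /modL.
set q := Q Lf Vf x; set a := Q L V x; set b := Q L V q.
have La : L a by have [] := Q_mem voronoi_L x.
have Lb : L b by have [] := Q_mem voronoi_L q.
have -> : Q Lf Vf (x - a) = q - a.
  by apply: QB_lattice => //; exact: L_sub_Lf.
have -> : q - b + x - q = x - b by rewrite addrAC [q - b - q]addrAC subrr add0r addrC.
by rewrite QB_lattice // addrA subrK.
Qed.
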